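(* Let $1\le k<n$, let $P,Q\in\mathbb{M}_n$ be rank-$k$ orthogonal projections and $\theta_1,\theta_2\in\mathbb{R}$. Then $\operatorname{span}_{\mathbb{R}}e^{i\theta_1}S(P)=\operatorname{span}_{\mathbb{R}}e^{i\theta_2}S(Q)$ if and only if $P=Q$ and $\theta_1\equiv\theta_2\pmod{\pi}$.
   Context: For $A\in\mathbb{M}_n$: $w_k(A)=\max\{|\operatorname{tr}(AP)|: P=P^*=P^2,\operatorname{tr}P=k\}$. For a rank-$k$ orthogonal projection $P$, $S(P)=\{B\in\mathbb{M}_n:\operatorname{tr}(BP)=w_k(B)\}$. *)

From HB Require Import structures.
From mathcomp Require Import all_boot all_order all_algebra.
From mathcomp Require Import complex.
From mathcomp Require Import reals trigo.
Set Implicit Arguments. Unset Strict Implicit. Unset Printing Implicit Defensive.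
Import Order.TTheory GRing.Theory Num.Theory.
Local Open Scope ring_scope.
Local Open Scope complex_scope.

Definition adjmx (R : rcfType) (n : nat) (A : 'M[R[i]]_n) : 'M[R[i]]_n :=
  (map_mx (@conjc R) A)^T.

Definition is_proj_rank (R : rcfType) (n k : nat) (P : 'M[R[i]]_n) : Prop :=
  adjmx P = P /\ P *m P = P /\ \tr P = k%:R.

Definition is_wk (R : rcfType) (n k : nat) (A : 'M[R[i]]_n) (w : R[i]) : Prop :=
  (exists P : 'M[R[i]]_n, is_proj_rank k P /\ `|\tr (A *m P)| = w) /\
  (forall P : 'M[R[i]]_n, is_proj_rank k P -> `|\tr (A *m P)| <= w).

Definition Sset (R : rcfType) (n k : nat) (P : 'M[R[i]]_n) : 'M[R[i]]_n -> Prop :=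
  fun B => is_wk k B (\tr (B *m P)).

Definition scale_set (R : rcfType) (n : nat) (c : R[i]) (S : 'M[R[i]]_n -> Prop)
  : 'M[R[i]]_n -> Prop := fun X => exists2 B, S B & X = c *: B.

Definition spanR (R : rcfType) (n : nat) (S : 'M[R[i]]_n -> Prop)
  : 'M[R[i]]_n -> Prop :=
  fun X => exists (m : nat) (c : 'I_m -> R) (Bs : 'I_m -> 'M[R[i]]_n),
    (forall j, S (Bs j)) /\ X = \sum_(j < m) ((c j)%:C) *: Bs j.

Definition expi (R : realType) (t : R) : R[i] := (cos t +i* sin t).

(* Since 1 lies in S(P), the equality of the spans forces e^{i(θ1-θ2)} to
   be real, i.e. θ1 ≡ θ2 (mod π).  The matrix P + i(1 - P) also lies in S(P),
   so tr(PQ) + i(k - tr(PQ)) must then be real, which gives tr(PQ) = k, and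
   hence the Hilbert-Schmidt norm of P - Q, tr P + tr Q - 2 tr(PQ), vanishes.
   Conversely, multiplying by the real unit e^{i(θ1-θ2)} = ±1 does not change
   a real span. *)
From HB Require Import structures.
From mathcomp Require Import all_boot all_order all_algebra.
From mathcomp Require Import complex.
From mathcomp Require Import boolp reals trigo.
From mathcomp Require Import ring.
Import Order.TTheory GRing.Theory Num.Theory.
Local Open Scope ring_scope.
Local Open Scope complex_scope.
Set Implicit Arguments. Unset Strict Implicit.

Section OrthogonalProjections.
Variables (R : rcfType) (n : nat).
Implicit Types A B P Q : 'M[R[i]]_n.

Lemma adjmxM A B : adjmx (A *m B) = adjmx B *m adjmx A.
Proof. by rewrite /adjmx map_mxM trmx_mul. Qed.

Lemma adjmxB A B : adjmx (A - B) = adjmx A - adjmx B.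
Proof. by rewrite /adjmx map_mxB linearB. Qed.

Lemma adjmx1 : adjmx (1 : 'M[R[i]]_n) = 1.
Proof. by rewrite /adjmx map_mx1 trmx1. Qed.

Lemma mxtrace_mul_adjmx A :
  \tr (A *m adjmx A) = \sum_i \sum_j A i j * (A i j)^*.
Proof.
apply: eq_bigr => i _; rewrite !mxE; apply: eq_bigr => j _.
by rewrite !mxE.
Qed.

Lemma mxtrace_mul_adjmx_ge0 A : 0 <= \tr (A *m adjmx A).
Proof.
rewrite mxtrace_mul_adjmx; apply: sumr_ge0 => i _; apply: sumr_ge0 => j _.
exact: mulcJ_ge0.
Qed.

Lemma mxtrace_mul_adjmx_eq0 A : \tr (A *m adjmx A) = 0 -> A = 0.
Proof.
rewrite mxtrace_mul_adjmx => tr0; apply/matrixP => i j; rewrite mxE.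
have row0 := psumr_eq0P (fun i _ => sumr_ge0 _ (fun j _ => mulcJ_ge0 (A i j))) tr0.
have /eqP := psumr_eq0P (fun j _ => mulcJ_ge0 (A i j)) (row0 i isT) (i := j) isT.
by rewrite mulf_eq0 conjc_eq0 orbb => /eqP.
Qed.

Definition orthoproj P := adjmx P = P /\ P *m P = P.

Lemma orthoproj_compl P : orthoproj P -> orthoproj (1 - P).
Proof.
case=> adjP idemP; split; first by rewrite adjmxB adjmx1 adjP.
by rewrite mulmxBl !mulmxBr idemP !mulmxE !mulr1 !mul1r subrr subr0.
Qed.

Lemma mxtrace_orthoprojM_ge0 P Q :
  orthoproj P -> orthoproj Q -> 0 <= \tr (P *m Q).
Proof.
case=> adjP idemP [adjQ idemQ].
have -> : \tr (P *m Q) = \tr ((P *m Q) *m adjmx (P *m Q)).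
  rewrite adjmxM adjP adjQ -mulmxA (mulmxA Q) idemQ.
  by rewrite [RHS]mxtrace_mulC -mulmxA idemP mxtrace_mulC.
exact: mxtrace_mul_adjmx_ge0.
Qed.

(* tr((P - Q)(P - Q)^* ) = tr P + tr Q - 2 tr(PQ). *)
Lemma orthoproj_mxtrace_inj P Q : orthoproj P -> orthoproj Q ->
  \tr P + \tr Q = \tr (P *m Q) *+ 2 -> P = Q.
Proof.
case=> adjP idemP [adjQ idemQ] trPQ.
apply/eqP; rewrite -subr_eq0; apply/eqP; apply: mxtrace_mul_adjmx_eq0.
rewrite adjmxB adjP adjQ mulmxBl !mulmxBr idemP idemQ !linearB /=.
rewrite [\tr (Q *m P)]mxtrace_mulC.
by rewrite opprK [- _ + _]addrC addrACA -opprD -mulr2n -trPQ subrr.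
Qed.

End OrthogonalProjections.

Section SsetMembers.
Variables (R : rcfType) (n k : nat).
Implicit Types B P Q : 'M[R[i]]_n.

Lemma is_proj_rank_orthoproj P : is_proj_rank k P -> orthoproj P.
Proof. by case=> adjP [idemP _]. Qed.

Lemma Sset_mxtrace_real P B : Sset k P B -> \tr (B *m P) \is Num.real.
Proof. by case=> -[Q [_ <-]] _; exact: normr_real. Qed.

Lemma Sset_intro P B : is_proj_rank k P -> 0 <= \tr (B *m P) ->
  (forall Q, is_proj_rank k Q -> `|\tr (B *m Q)| <= \tr (B *m P)) -> Sset k P B.
Proof. by move=> hP tr_ge0 tr_max; split=> //; exists P; rewrite ger0_norm. Qed.

Lemma Sset1 P : is_proj_rank k P -> Sset k P 1.
Proof.
move=> hP; apply: Sset_intro => //; rewrite mul1mx; case: hP => _ [_ ->].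
  exact: ler0n.
by move=> Q [_ [_ trQ]]; rewrite mul1mx trQ normr_nat.
Qed.

Lemma mxtrace_addi_compl P Q :
  \tr ((P + 'i *: (1 - P)) *m Q) = \tr (P *m Q) + 'i * (\tr Q - \tr (P *m Q)).
Proof. by rewrite mulmxDl -scalemxAl mulmxBl mul1mx mxtraceD mxtraceZ linearB. Qed.

(* For Q of rank k, tr(PQ) and tr((1 - P)Q) are nonnegative and add up to k. *)
Lemma Sset_addi_compl P : is_proj_rank k P -> Sset k P (P + 'i *: (1 - P)).
Proof.
move=> hP; have [_ [idemP trP]] := hP; have oP := is_proj_rank_orthoproj hP.
have trPP : \tr ((P + 'i *: (1 - P)) *m P) = k%:R.
  by rewrite mxtrace_addi_compl idemP trP subrr mulr0 addr0.
apply: Sset_intro => //; rewrite trPP ?ler0n // => Q hQ.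
have oQ := is_proj_rank_orthoproj hQ; have [_ [_ trQ]] := hQ.
have trPQ_ge0 := mxtrace_orthoprojM_ge0 oP oQ.
have trCQ_ge0 : 0 <= \tr Q - \tr (P *m Q).
  have := mxtrace_orthoprojM_ge0 (orthoproj_compl oP) oQ.
  by rewrite mulmxBl mul1mx linearB.
rewrite mxtrace_addi_compl -trQ; apply: le_trans (ler_normD _ _) _.
by rewrite normrM normCi mul1r !ger0_norm // addrC subrK.
Qed.

End SsetMembers.

Section RealSpan.
Variables (R : rcfType) (n : nat).
Implicit Types (S : 'M[R[i]]_n -> Prop) (e : R[i]).

Lemma spanR_self S X : S X -> spanR S X.
Proof.
by move=> SX; exists 1%N, (fun=> 1), (fun=> X); rewrite big_ord1 rmorph1 scale1r.
Qed.

Lemma spanR_scale_sub (c : R) e S X : c != 0 ->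
  spanR (scale_set (c%:C * e) S) X -> spanR (scale_set e S) X.
Proof.
move=> c_neq0 [m [a [Bs [SBs ->]]]].
have cC_neq0 : c%:C != 0 by rewrite (inj_eq (@complexI R)).
exists m, (fun j => a j * c), (fun j => c^-1%:C *: Bs j); split=> [j | ].
  have [B SB ->] := SBs j; exists B => //.
  by rewrite scalerA mulrA -rmorphM mulVf // rmorph1 mul1r.
apply: eq_bigr => j _.
by rewrite scalerA rmorphM -mulrA -rmorphM mulfV // rmorph1 mulr1.
Qed.

Lemma spanR_scale_real (c : R) e S : c != 0 ->
  spanR (scale_set (c%:C * e) S) = spanR (scale_set e S).
Proof.
move=> c_neq0; apply/funext => X; apply/propext; split; first exact: spanR_scale_sub.
move=> spanX; apply: (@spanR_scale_sub c^-1); first by rewrite invr_eq0.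
by rewrite mulrA -rmorphM mulVf // rmorph1 mul1r.
Qed.

Lemma spanR_mxtrace_real (Q : 'M[R[i]]_n) e S X :
  (forall B, S B -> \tr (B *m Q) \is Num.real) ->
  spanR (scale_set e S) X -> e^* * \tr (X *m Q) \is Num.real.
Proof.
move=> S_real [m [c [Bs [SBs ->]]]].
rewrite mulmx_suml raddf_sum /= mulr_sumr; apply: rpred_sum => j _.
have [B SB ->] := SBs j; rewrite -!scalemxAl !mxtraceZ.
have -> : e^* * ((c j)%:C * (e * \tr (B *m Q))) =
          (c j)%:C * ((e * e^*) * \tr (B *m Q)) by ring.
apply: rpredM; first by apply/complex_realP; exists (c j).
by apply: rpredM; [exact: ger0_real (mulcJ_ge0 e) | exact: S_real].
Qed.

End RealSpan.

Section Expi.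
Variable R : realType.
Implicit Types (t x : R) (z : int).

Lemma sin_intr_pi z : sin (z%:~R * pi) = 0 :> R.
Proof.
have sin_pi_natmul m : sin (pi *+ m) = 0 :> R.
  by have := alternatingn (@sinDpi R) m 0; rewrite add0r sin0 mulr0.
case: z => m; rewrite mulrC mulrzr; first exact: sin_pi_natmul.
by rewrite NegzE mulrNz sinN -pmulrn sin_pi_natmul oppr0.
Qed.

Lemma sin_eq0P x : sin x = 0 <-> exists z : int, x = z%:~R * pi.
Proof.
split=> [sinx0 | [z ->]]; last exact: sin_intr_pi.
pose z := Num.floor (x / pi); exists z.
have pi_pos := @pi_gt0 R.
have zpi_le : z%:~R * pi <= x by rewrite -ler_pdivlMr // floor_le.
have x_lt : x - z%:~R * pi < pi.
  have := floorD1_gt (x / pi); rewrite -/z intrD ltr_pdivrMr //.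
  by rewrite mulrDl mul1r -ltrBlDl.
have : sin (x - z%:~R * pi) = 0 by rewrite sinB sinx0 sin_intr_pi !mul0r mulr0 subrr.
move: zpi_le; rewrite le_eqVlt => /orP[/eqP -> // | zpi_lt].
by move/eqP; rewrite gt_eqF // sin_gt0_pi // subr_gt0 zpi_lt.
Qed.

Lemma expiD t1 t2 : expi (t1 + t2) = expi t1 * expi t2.
Proof. by rewrite /expi cosD sinD; simpc; congr (_ +i* _); ring. Qed.

Lemma conj_expi t : (expi t)^*%R = expi (- t).
Proof. by rewrite /expi cosN sinN. Qed.

Lemma expi_neq0 t : expi t != 0.
Proof.
apply/eqP => -[cos0 sin0].
by have /eqP := cos2Dsin2 t; rewrite cos0 sin0 expr0n addr0 eq_sym oner_eq0.
Qed.

Lemma expi_real t : (expi t \is Num.real) = (sin t == 0).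
Proof. exact: complex_real. Qed.

Lemma expi_intr_pi z : expi (z%:~R * pi : R) = (cos (z%:~R * pi))%:C.
Proof. by rewrite /expi sin_intr_pi. Qed.

Lemma cos_intr_pi_neq0 z : cos (z%:~R * pi) != 0 :> R.
Proof. by rewrite -norm_sin_eq1 sin_intr_pi normr0 eq_sym oner_eq0. Qed.

End Expi.

Theorem mainTheorem4 (R : realType) (n k : nat) (P Q : 'M[R[i]]_n)
    (t1 t2 : R) :
  (1 <= k)%N -> (k < n)%N ->
  is_proj_rank k P -> is_proj_rank k Q ->
  ((spanR (scale_set (expi t1) (Sset k P)) = spanR (scale_set (expi t2) (Sset k Q)))
   <-> (P = Q /\ exists z : int, t1 - t2 = z%:~R * pi)).
Proof.
move=> k_gt0 _ hP hQ; have [[_ [_ trP]] [_ [_ trQ]]] := (hP, hQ).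
have [oP oQ] := (is_proj_rank_orthoproj hP, is_proj_rank_orthoproj hQ).
split=> [span_eq | [<- [z t12]]]; last first.
  have -> : t1 = z%:~R * pi + t2 by rewrite -t12 subrK.
  by rewrite expiD expi_intr_pi spanR_scale_real // cos_intr_pi_neq0.
set w := expi (t1 - t2).
have w_trQ_real B : Sset k P B -> w * \tr (B *m Q) \is Num.real.
  move=> SB; rewrite /w addrC expiD -conj_expi -mulrA -mxtraceZ scalemxAl.
  apply: (spanR_mxtrace_real (@Sset_mxtrace_real _ _ k Q)).
  by rewrite -span_eq; apply: spanR_self; exists B.
have k_neq0 : k%:R != 0 :> R[i] by rewrite pnatr_eq0 -lt0n.
have w_real : w \is Num.real.
  by have := w_trQ_real _ (Sset1 hP); rewrite mul1mx trQ realrM ?realn.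
split; last by apply/sin_eq0P/eqP; rewrite -expi_real.
have trPQ_real := ger0_real (mxtrace_orthoprojM_ge0 oP oQ).
have /Creal_ImP : \tr (P *m Q) + 'i * (k%:R - \tr (P *m Q)) \is Num.real.
  rewrite -trQ -mxtrace_addi_compl -(realMr _ (expi_neq0 _) w_real).
  exact: w_trQ_real (Sset_addi_compl hP).
rewrite Im_rect ?rpredB ?realn // => /eqP; rewrite subr_eq0 => /eqP trPQ.
by apply: orthoproj_mxtrace_inj oP oQ _; rewrite trP trQ -trPQ mulr2n.
Qed.
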